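(* Let $r\in\mathbb{N}$, let $\Theta$ be a compact parameter set with $\theta^*\in\Theta$, and for each $\theta\in\Theta$ let $f_\theta:\mathbb{N}_0\times\mathbb{R}_+\to\mathbb{R}_+$ be measurable. Suppose there are non-negative constants $a,b$ with $a+b<1$ such that for all $(y,\lambda),(y',\lambda')\in\mathbb{N}_0\times\mathbb{R}_+$, $$\sup_{\theta\in\Theta}\big|f_\theta(y,\lambda)-f_\theta(y',\lambda')\big|\le a|y-y'|+b|\lambda-\lambda'|.$$ Let $\{(Y_t,\lambda_t)\}$ be the strictly stationary solution of $$Y_t\mid\mathcal{F}_{t-1}\sim NB(r,p_t),\qquad r\frac{1-p_t}{p_t}=\lambda_t=f_{\theta^*}(Y_{t-1},\lambda_{t-1}),$$ where $\mathcal{F}_{t-1}=\sigma(Y_{t-1},Y_{t-2},\dots)$. If $$(a+b)^2+\frac{a^2}{r}<1,$$ then $\mathbb{E}(Y_t^2)<\infty$ for all $t\in\mathbb{Z}$.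
   Context: $NB(r,p)$ denotes the negative binomial distribution with parameters $r$ and $p$, having mean $r(1-p)/p$ and variance $r(1-p)/p^2$. *)

From HB Require Import structures.
From mathcomp Require Import all_boot all_order all_algebra.
From mathcomp Require Import all_classical all_reals all_analysis.
Set Implicit Arguments. Unset Strict Implicit. Unset Printing Implicit Defensive.
Import Order.TTheory GRing.Theory Num.Theory.
Import numFieldNormedType.Exports.
Local Open Scope classical_set_scope.
Local Open Scope ring_scope.

(* pmf at k of NB(r,p) with p = r/(r+lam), i.e. mean r(1-p)/p = lam *)
Definition nb_p {R : realType} (r : nat) (lam : R) : R := r%:R / (r%:R + lam).
Definition nb_pmf {R : realType} (r : nat) (lam : R) (k : nat) : R :=
  'C(k + r - 1, k)%:R * (nb_p r lam) ^+ r * (1 - nb_p r lam) ^+ k.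

Definition past_sigma {d} {T : measurableType d} (Y : int -> T -> nat) (t : int)
  : set (set T) :=
  <<s [set A | exists s (B : set nat), (s <= t)%R /\ A = Y s @^-1` B] >>.

(* strict stationarity of (Y_t, lam_t)_{t in Z}: finite-dimensional laws
   (determined by rectangles) are shift invariant *)
Definition strictly_stationary {d} {T : measurableType d} {R : realType}
  (P : probability T R) (Y : int -> T -> nat) (lam : int -> T -> R) : Prop :=
  forall (n : nat) (ts : 'I_n -> int) (h : int)
         (B : 'I_n -> set nat) (C : 'I_n -> set R),
    (forall i, measurable (C i)) ->
    P (\bigcap_i [set x | B i (Y (ts i) x) /\ C i (lam (ts i) x)]) =
    P (\bigcap_i [set x | B i (Y (ts i + h)%R x) /\ C i (lam (ts i + h)%R x)]).

From HB Require Import structures.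
From mathcomp Require Import all_boot all_order all_algebra.
From mathcomp Require Import all_classical all_reals all_analysis.
From mathcomp Require Import ring lra zify measurable_realfun.
Set Implicit Arguments. Unset Strict Implicit. Unset Printing Implicit Defensive.
Import Order.TTheory GRing.Theory Num.Theory.
Import numFieldNormedType.Exports.
Local Open Scope classical_set_scope.
Local Open Scope ring_scope.

(* Given the past, [Y_t] is negative binomial with mean [lam_t] and variance
   [lam_t + lam_t ^ 2 / r], so on every past event [A]
     [E[(u + a Y_t) ^ 2; A] <= E[(u + a lam_t) ^ 2 + a ^ 2 (lam_t + lam_t ^ 2 / r); A]].
   The Lipschitz condition gives [lam_t <= c + a Y_(t-1) + b lam_(t-1)] with
   [c = f(0, 0)]; inserting it yields a quadratic in [lam_(t-1)] with leading
   coefficient [(a + b) ^ 2 + a ^ 2 / r < 1], hence a drift inequality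
     [E[lam_t ^ 2; A] <= rho E[lam_(t-1) ^ 2; A] + K P(A)],  [rho < 1],
   which iterates to [E[lam_t ^ 2; lam_(t-n) <= L] <= rho ^ n L ^ 2 + K / (1 - rho)].
   Stationarity bounds the remaining part of [E[lam_t ^ 2; lam_t < M]] by
   [M ^ 2 P(lam_t > L)], so [E lam_t ^ 2] is finite, and then so is [E Y_t ^ 2]. *)

Section BinomialSeries.
Variable R : realFieldType.

(* Partial sums of the negative binomial series
   [\sum_k 'C(k + m, k) q ^ k = (1 - q) ^ -(m + 1)]. *)
Definition binom_psum (q : R) (m N : nat) : R := \sum_(k < N) 'C(k + m, k)%:R * q ^+ k.

Lemma binom_psumSS (q : R) m N :
  binom_psum q m.+1 N.+1 = binom_psum q m N.+1 + q * binom_psum q m.+1 N.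
Proof.
rewrite /binom_psum big_ord_recl [in RHS]big_ord_recl /= !bin0 -addrA; congr (_ + _).
rewrite mulr_sumr -big_split /=; apply: eq_bigr => k _.
rewrite /bump /= !add1n addnS binS natrD exprS -addSnnS; ring.
Qed.

Lemma binom_psum_le (q : R) m N :
  0 <= q < 1 -> (1 - q) ^+ m.+1 * binom_psum q m N <= 1.
Proof.
move=> /andP[q_ge0 q_lt1]; elim: m N => [|m IHm] N.
  rewrite expr1 /binom_psum (eq_bigr (fun k : 'I_N => q ^+ k)); last first.
    by move=> k _; rewrite addn0 binn mul1r.
  by rewrite -opprB mulNr -subrX1 opprB lerBlDr lerDl exprn_ge0.
apply: le_trans (IHm N.+1); rewrite exprSr -mulrA.
apply: ler_wpM2l; first by rewrite exprn_ge0 // subr_ge0 ltW.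
rewrite mulrBl mul1r lerBlDr -binom_psumSS.
by rewrite /binom_psum big_ord_recr /= lerDl mulr_ge0 ?exprn_ge0.
Qed.

(* [k C(k+m, k) = (m+1) C(k-1+(m+1), k-1)] lowers the index of summation by one. *)
Lemma binom_psum_shift (q : R) (w : nat -> R) m N :
  \sum_(k < N) w k * k%:R * 'C(k + m, k)%:R * q ^+ k =
  m.+1%:R * q * \sum_(k < N.-1) w k.+1 * 'C(k + m.+1, k)%:R * q ^+ k.
Proof.
case: N => [|N]; first by rewrite !big_ord0 mulr0.
rewrite big_ord_recl /= mulr0 !mul0r add0r mulr_sumr; apply: eq_bigr => k _.
have /(congr1 (fun n => n%:R : R)) : (k.+1 * 'C(k.+1 + m, k.+1) = m.+1 * 'C(k + m.+1, k))%N.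
  by rewrite mul_bin_left addSn -addnS addKn.
rewrite /bump /= add1n exprS !natrM => bin_shift.
rewrite -[w k.+1 * _ * _]mulrA bin_shift; ring.
Qed.

End BinomialSeries.

Section NegBinomialMoments.
Variables (R : realType) (m : nat) (lam : R).
Hypothesis lam_ge0 : 0 <= lam.
Local Notation p := (nb_p m.+1 lam).
Local Notation pmf := (nb_pmf m.+1 lam).

Lemma nb_p_itv : 0 < p <= 1.
Proof.
have m_gt0 : 0 < m.+1%:R :> R by rewrite ltr0n.
by rewrite divr_gt0 ?ltr_wpDr //= ler_pdivrMr ?ltr_wpDr // mul1r lerDl.
Qed.

Lemma nb_odds : (1 - p) / p = lam / m.+1%:R.
Proof.
have m_gt0 : 0 < 1 + m%:R :> R by rewrite nat1r ltr0n.
rewrite /nb_p; field.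
by rewrite !gt_eqF // ltr_wpDr.
Qed.

Lemma nb_pmfE k : pmf k = p ^+ m.+1 * ('C(k + m, k)%:R * (1 - p) ^+ k).
Proof. by rewrite /nb_pmf addnS subn1 /= mulrCA mulrA. Qed.

Lemma nb_pmf_ge0 k : 0 <= pmf k.
Proof.
have /andP[p_gt0 p_le1] := nb_p_itv.
by rewrite nb_pmfE !mulr_ge0 // exprn_ge0 // ?subr_ge0 // ltW.
Qed.

Lemma nb_binom_psum_le j N : p ^+ j.+1 * binom_psum (1 - p) j N <= 1.
Proof.
have /andP[p_gt0 p_le1] := nb_p_itv.
have := @binom_psum_le _ (1 - p) j N; rewrite subKr; apply.
by rewrite subr_ge0 p_le1 ltrBlDr ltrDl.
Qed.

Lemma nb_psum_le1 N : \sum_(k < N) pmf k <= 1.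
Proof. by under eq_bigr do rewrite nb_pmfE; rewrite -mulr_sumr nb_binom_psum_le. Qed.

Lemma nb_psum_mean N : \sum_(k < N) k%:R * pmf k <= lam.
Proof.
have /andP[p_gt0 p_le1] := nb_p_itv.
rewrite (eq_bigr (fun k : 'I_N =>
    p ^+ m.+1 * (1 * k%:R * 'C(k + m, k)%:R * (1 - p) ^+ k))); last first.
  by move=> k _; rewrite nb_pmfE; ring.
rewrite -mulr_sumr (binom_psum_shift _ (fun=> 1)).
under eq_bigr do rewrite mul1r.
have -> : forall S, p ^+ m.+1 * (m.+1%:R * (1 - p) * S) =
    m.+1%:R * ((1 - p) / p) * (p ^+ m.+2 * S).
  by move=> S; rewrite [p ^+ m.+2]exprS; field; rewrite gt_eqF.
rewrite nb_odds [_ * (lam / _)]mulrCA mulfV ?pnatr_eq0 // mulr1.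
by apply: ler_piMr => //; exact: nb_binom_psum_le.
Qed.

Lemma nb_psum_fact2 N :
  \sum_(k < N) k%:R * (k%:R - 1) * pmf k <= (1 + m.+1%:R^-1) * lam ^+ 2.
Proof.
have /andP[p_gt0 p_le1] := nb_p_itv.
rewrite (eq_bigr (fun k : 'I_N =>
    p ^+ m.+1 * ((k%:R - 1) * k%:R * 'C(k + m, k)%:R * (1 - p) ^+ k))); last first.
  by move=> k _; rewrite nb_pmfE; ring.
rewrite -mulr_sumr (binom_psum_shift _ (fun k => k%:R - 1)).
under eq_bigr do rewrite -natr1 addrK -[_%:R * _]mul1r mulrA.
rewrite (binom_psum_shift _ (fun=> 1)).
under eq_bigr do rewrite mul1r.
have -> : forall S, p ^+ m.+1 * (m.+1%:R * (1 - p) * (m.+2%:R * (1 - p) * S)) =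
    m.+1%:R * m.+2%:R * ((1 - p) / p) ^+ 2 * (p ^+ m.+3 * S).
  by move=> S; rewrite [p ^+ m.+3]exprS [p ^+ m.+2]exprS; field; rewrite gt_eqF.
rewrite nb_odds.
have -> : m.+1%:R * m.+2%:R * (lam / m.+1%:R) ^+ 2 = (1 + m.+1%:R^-1) * lam ^+ 2.
  by rewrite -!natr1; field; rewrite natr1 pnatr_eq0.
apply: ler_piMr; first by rewrite mulr_ge0 ?exprn_ge0 ?addr_ge0 ?invr_ge0.
exact: nb_binom_psum_le.
Qed.

End NegBinomialMoments.

Definition nb_var (R : realType) (r : nat) (lam : R) : R := lam + lam ^+ 2 / r%:R.

Lemma nb_var_ge0 (R : realType) (r : nat) (lam : R) : 0 <= lam -> 0 <= nb_var r lam.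
Proof. by move=> lam_ge0; rewrite addr_ge0 // divr_ge0 ?sqr_ge0. Qed.

Lemma nb_psum_sq_affine_le (R : realType) (r : nat) (lam u a : R) N :
  (0 < r)%N -> 0 <= lam -> 0 <= u -> 0 <= a ->
  \sum_(k < N) (u + a * k%:R) ^+ 2 * nb_pmf r lam k <=
  (u + a * lam) ^+ 2 + a ^+ 2 * nb_var r lam.
Proof.
case: r => [//|m] _ lam_ge0 u_ge0 a_ge0.
have -> : \sum_(k < N) (u + a * k%:R) ^+ 2 * nb_pmf m.+1 lam k =
    u ^+ 2 * \sum_(k < N) nb_pmf m.+1 lam k
    + (2 * a * u + a ^+ 2) * \sum_(k < N) k%:R * nb_pmf m.+1 lam k
    + a ^+ 2 * \sum_(k < N) k%:R * (k%:R - 1) * nb_pmf m.+1 lam k.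
  by rewrite !mulr_sumr -!big_split; apply: eq_bigr => k _ /=; ring.
have -> : (u + a * lam) ^+ 2 + a ^+ 2 * nb_var m.+1 lam =
    u ^+ 2 * 1 + (2 * a * u + a ^+ 2) * lam + a ^+ 2 * ((1 + m.+1%:R^-1) * lam ^+ 2).
  by rewrite /nb_var; ring.
apply: lerD; first apply: lerD.
- by apply: ler_wpM2l; [exact: sqr_ge0 | exact: nb_psum_le1].
- by apply: ler_wpM2l; [rewrite addr_ge0 ?sqr_ge0 ?mulr_ge0 | exact: nb_psum_mean].
- by apply: ler_wpM2l; [exact: sqr_ge0 | exact: nb_psum_fact2].
Qed.

Lemma quadratic_dominated (R : realFieldType) (al be ga : R) : 0 <= al < 1 ->
  exists rho K, [/\ 0 <= rho, rho < 1, 0 <= K &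
    forall x, al * x ^+ 2 + be * x + ga <= rho * x ^+ 2 + K].
Proof.
move=> /andP[al_ge0 al_lt1]; set dl := (1 - al) / 2.
have dl_gt0 : 0 < dl by rewrite divr_gt0 // subr_gt0.
exists (al + dl), (`|ga| + be ^+ 2 / (4 * dl)); split.
- by rewrite addr_ge0 // ltW.
- by rewrite /dl; lra.
- by rewrite addr_ge0 // divr_ge0 ?sqr_ge0 // mulr_ge0 // ltW.
move=> x; have sq_ge0 : 0 <= (2 * dl * x - be) ^+ 2 / (4 * dl).
  by rewrite divr_ge0 ?sqr_ge0 // mulr_ge0 // ltW.
have sqE : (2 * dl * x - be) ^+ 2 / (4 * dl) = dl * x ^+ 2 - be * x + be ^+ 2 / (4 * dl).
  by field; rewrite gt_eqF.
have := ler_norm ga; move: sq_ge0; rewrite sqE; lra.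
Qed.

(* The clamp at [0] makes the map nonincreasing on all of [R]. *)
Lemma measurable_nb_p (R : realType) (r : nat) : (0 < r)%N ->
  measurable_fun [set: R] (fun x => nb_p r (Num.max x 0)).
Proof.
move=> r_gt0; have rR_gt0 : 0 < r%:R :> R by rewrite ltr0n.
have den_gt0 (x : R) : 0 < r%:R + Num.max x 0 by rewrite ltr_wpDr // le_max lexx orbT.
apply: nonincreasing_measurable => // x y xy.
rewrite /nb_p ler_pdivrMr // mulrAC ler_pdivlMr // ler_pM2l // lerD2l.
by rewrite ge_max !le_max xy lexx orbT.
Qed.

Lemma measurable_nb_pmf (R : realType) (r : nat) d (T : measurableType d)
    (l : T -> R) k :
  (0 < r)%N -> measurable_fun [set: T] l -> (forall x, 0 <= l x) ->
  measurable_fun [set: T] (fun x => nb_pmf r (l x) k).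
Proof.
move=> r_gt0 ml l_ge0.
have mp : measurable_fun [set: T] (fun x => nb_p r (l x)).
  rewrite (_ : (fun x => _) = (fun x => nb_p r (Num.max x 0)) \o l); last first.
    by apply/funext => x /=; rewrite max_l.
  by apply: measurableT_comp ml; exact: measurable_nb_p.
apply: measurable_funM; first apply: measurable_funM.
- exact: measurable_cst.
- exact: measurable_funX.
- by apply/measurable_funX/measurable_funB => //; exact: measurable_cst.
Qed.

Section PastSigma.
Context d (T : measurableType d) (Y : int -> T -> nat).

Lemma past_sigmaT u : past_sigma Y u setT.
Proof. exact: (@measurableT _ (g_sigma_algebraType _)). Qed.

Lemma past_sigmaI u A B :
  past_sigma Y u A -> past_sigma Y u B -> past_sigma Y u (A `&` B).
Proof. exact: (@measurableI _ (g_sigma_algebraType _)). Qed.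

Lemma past_sigma_le u v A : (u <= v)%R -> past_sigma Y u A -> past_sigma Y v A.
Proof.
move=> uv; apply: sub_sigma_algebra2 => _ [s [B [su ->]]].
by exists s, B; split => //; apply: le_trans uv.
Qed.

Lemma past_sigma_measurable u A :
  (forall t, measurable_fun setT (Y t)) -> past_sigma Y u A -> measurable A.
Proof.
move=> mY; apply: smallest_sub; first exact: sigma_algebra_measurable.
by move=> _ [s [B [_ ->]]]; rewrite -[_ @^-1` _]setTI; exact: mY.
Qed.

End PastSigma.

Definition band {T} {R : realType} (g : T -> R) (j : nat) : set T :=
  g @^-1` `[j%:R, j.+1%:R[.

Lemma bigcup_band {T} {R : realType} (g : T -> R) :
  (forall x, 0 <= g x) -> \bigcup_j band g j = setT.
Proof.
move=> g_ge0; apply/seteqP; split => // x _.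
by exists (Num.truncn (g x)) => //; rewrite /band /= in_itv /= truncn_itv.
Qed.

Lemma trivIset_band {T} {R : realType} (g : T -> R) : trivIset setT (band g).
Proof.
apply/trivIsetP => i j _ _ ij; apply/seteqP; split => // x [].
rewrite /band /= !in_itv /= => /andP[i_le i_lt] /andP[j_le j_lt].
have := le_lt_trans i_le j_lt; have := le_lt_trans j_le i_lt; rewrite !ltr_nat.
by move=> ji1 ij1; move: ij; rewrite eqn_leq -ltnS ij1 -ltnS ji1.
Qed.

Lemma exists_expr_mul_le1 (R : realType) (rho C : R) :
  0 <= rho < 1 -> 0 <= C -> exists n : nat, rho ^+ n * C <= 1.
Proof.
move=> /andP[rho_ge0 rho_lt1] C_ge0; have rho_norm : `|rho| < 1 by rewrite ger0_norm.
have C1_gt0 : 0 < C + 1 by rewrite ltr_wpDl.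
have /cvgr_lt/(_ (C + 1)^-1) := cvg_expr rho_norm.
rewrite invr_gt0 C1_gt0 => /(_ isT) [N _ /(_ N (leqnn N)) /= rhoN].
exists N; apply: le_trans (ler_wpM2r C_ge0 (ltW rhoN)) _.
by rewrite mulrC ler_pdivrMr // mul1r lerDl.
Qed.

Lemma measurable_preimage_itv d (T : measurableType d) (R : realType) (g : T -> R)
    (i : interval R) :
  measurable_fun setT g -> measurable (g @^-1` [set` i]).
Proof. by move=> mg; rewrite -[_ @^-1` _]setTI; apply: mg => //; exact: measurable_itv. Qed.

Lemma exists_probability_gt_le d (T : measurableType d) (R : realType)
    (P : probability T R) (f : T -> R) (e : R) :
  measurable_fun setT f -> 0 < e ->
  exists L : nat, (P (f @^-1` `]L%:R, +oo[) <= e%:E)%E.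
Proof.
move=> mf e_gt0; pose F (L : nat) := f @^-1` `]L%:R, +oo[.
have [//|not_small] := pselect (exists L : nat, (P (F L) <= e%:E)%E).
have mF L : measurable (F L) by exact: measurable_preimage_itv.
have capF : \bigcap_n F n = set0.
  apply/seteqP; split => // x /(_ (Num.truncn `|f x|).+1 I); rewrite /F /= in_itv /= andbT.
  have /andP[_ fx_lt] := truncn_itv (normr_ge0 (f x)).
  by move=> /(lt_trans fx_lt); rewrite ltNge ler_norm.
have PF_cvg : (P \o F) @ \oo --> 0%E.
  rewrite -(measure0 P) -capF; apply: nonincreasing_cvg_mu => //.
  - by rewrite (le_lt_trans (probability_le1 P (mF 0%N))) ?ltey.
  - by rewrite capF.
  - move=> m n mn; apply/subsetPset => x; rewrite /F /= !in_itv /= !andbT.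
    by apply: le_lt_trans; rewrite ler_nat.
have : (e%:E <= 0)%E.
  apply: (cvge_to_ge PF_cvg); apply: nearW => n /=.
  by rewrite leNgt; apply/negP => PFn; apply: not_small; exists n; rewrite ltW.
by rewrite lee_fin leNgt e_gt0.
Qed.

Lemma measurable_band d (T : measurableType d) (R : realType) (g : T -> R) j :
  measurable_fun setT g -> measurable (band g j).
Proof. exact: measurable_preimage_itv. Qed.

Section IntegralBands.
Context d (T : measurableType d) (R : realType) (mu : {measure set T -> \bar R}).
Context (g : T -> R) (F : T -> \bar R).
Hypotheses (mg : measurable_fun setT g) (g_ge0 : forall x, 0 <= g x).
Hypotheses (mF : measurable_fun setT F) (F_ge0 : forall x, (0 <= F x)%E).

Lemma ge0_integral_bands (A : set T) : measurable A ->
  (\int[mu]_(x in A) F x = \sum_(j <oo) \int[mu]_(x in A `&` band g j) F x)%E.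
Proof.
move=> mA; rewrite -[in LHS](setIT A) -(bigcup_band g_ge0) setI_bigcupr.
rewrite ge0_integral_bigcup //.
- by move=> j; apply: measurableI => //; exact: measurable_band.
- exact: measurable_funTS.
- apply/trivIsetP => i j _ _ ij; rewrite setIACA setIid.
  by move/trivIsetP : (trivIset_band (g := g)) => /(_ i j I I ij) ->; rewrite setI0.
Qed.

Lemma ge0_integral_le_truncated (C : \bar R) :
  (forall M : nat, \int[mu]_(x in g @^-1` `]-oo, M%:R[) F x <= C)%E ->
  (\int[mu]_x F x <= C)%E.
Proof.
move=> truncated_le; rewrite ge0_integral_bands //.
under eq_eseriesr do rewrite setTI.
apply: lime_le; first by apply: is_cvg_nneseries => j _ _; exact: integral_ge0.
near=> M; have := sub_trivIset (subsetT [set` index_iota 0 M]) (trivIset_band (g := g)).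
move=> /ge0_integral_bigsetU <-; last 4 first.
- by move=> j; exact: measurable_band.
- exact: iota_uniq.
- exact: measurable_funTS.
- by [].
apply: le_trans (truncated_le M); apply: ge0_subset_integral => //.
- by apply: bigsetU_measurable => j _; exact: measurable_band.
- exact: measurable_preimage_itv.
- exact: measurable_funTS.
rewrite -bigcup_seq => x [j /=]; rewrite mem_index_iota => /andP[_ jM].
by rewrite /band /= !in_itv /= => /andP[_ /lt_le_trans]; apply; rewrite ler_nat.
Unshelve. all: by end_near.
Qed.

End IntegralBands.

Lemma stationary_tail d (T : measurableType d) (R : realType) (P : probability T R)
    (Y : int -> T -> nat) (lam : int -> T -> R) (u h : int) (L : R) :
  strictly_stationary P Y lam ->
  P (lam u @^-1` `]L, +oo[) = P (lam (u + h)%R @^-1` `]L, +oo[).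
Proof.
move=> /(_ 1%N (fun=> u) h (fun=> setT) (fun=> `]L, +oo[%classic)).
have tail v : \bigcap_(i in [set: 'I_1]) [set x | setT (Y v x) /\ `]L, +oo[%classic (lam v x)] =
    lam v @^-1` `]L, +oo[.
  by apply/seteqP; split => [x /(_ ord0 I) []|x /= Lx i _].
by rewrite !tail; apply => _; exact: measurable_itv.
Qed.

Section NegBinomialINGARCH.
Context (R : realType) (r : nat) (d : measure_display) (T : measurableType d).
Context (P : probability T R) (Y : int -> T -> nat) (lam : int -> T -> R).
Hypothesis r_gt0 : (0 < r)%N.
Hypothesis mY : forall t, measurable_fun setT (Y t).
Hypothesis mlam : forall t, measurable_fun setT (lam t).
Hypothesis lam_ge0 : forall t x, 0 <= lam t x.
Hypothesis lam_past : forall t B, measurable B -> past_sigma Y (t - 1) (lam t @^-1` B).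
Hypothesis Y_cond_nb : forall t (A : set T) (k : nat), past_sigma Y (t - 1) A ->
  P (A `&` Y t @^-1` [set k]) = (\int[P]_(x in A) (nb_pmf r (lam t x) k)%:E)%E.

Let past_measurable u A : past_sigma Y u A -> measurable A.
Proof. exact: past_sigma_measurable. Qed.

Let mlam_sq t : measurable_fun setT (fun x => (lam t x ^+ 2)%:E).
Proof. by apply/measurable_EFinP; exact: measurable_funX. Qed.

Let nb_pmf_lam_ge0 t k x : 0 <= nb_pmf r (lam t x) k.
Proof. by case: r r_gt0 => // m _; exact: nb_pmf_ge0. Qed.

Let measurable_nb_pmf_lam t k (g : R) :
  measurable_fun setT (fun x => (g * nb_pmf r (lam t x) k)%:E).
Proof.
by apply/measurable_EFinP/measurable_funM; [exact: measurable_cst | exact: measurable_nb_pmf].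
Qed.

Lemma integral_past_Y t (A : set T) (g : nat -> R) :
  past_sigma Y (t - 1) A -> (forall k, 0 <= g k) ->
  (\int[P]_(x in A) (g (Y t x))%:E =
   \int[P]_(x in A) \sum_(k <oo) (g k * nb_pmf r (lam t x) k)%:E)%E.
Proof.
move=> At g_ge0; have mA := past_measurable At.
pose F k := A `&` Y t @^-1` [set k].
have mF k : measurable (F k).
  by apply: measurableI => //; rewrite -[_ @^-1` _]setTI; exact: mY.
have mgY : measurable_fun setT (fun x => g (Y t x)).
  by apply: measurableT_comp (mY t) => // _ B _.
have A_eq : A = \bigcup_k F k.
  by apply/seteqP; split => [x Ax|x [k _ []//]]; exists (Y t x).
rewrite {1}A_eq ge0_integral_bigcup //; last 3 first.
- by apply/measurable_EFinP; exact: measurable_funTS.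
- by move=> x _; rewrite lee_fin.
- apply/trivIsetP => i j _ _; apply: contra_neqP => /eqP.
  by move=> /set0P[x [[_ /= <-] [_ /= <-]]].
rewrite integral_nneseries //; first last.
- by move=> k x _; rewrite lee_fin mulr_ge0.
- by move=> k; apply: measurable_funTS; exact: measurable_nb_pmf_lam.
apply: eq_eseriesr => k _.
transitivity (\int[P]_(x in F k) (cst (g k)%:E) x)%E.
  by apply: eq_integral => x; rewrite inE => -[_ /= ->].
rewrite integral_cst //.
transitivity ((g k)%:E * \int[P]_(x in A) (nb_pmf r (lam t x) k)%:E)%E.
  by congr (_ * _)%E; exact: Y_cond_nb.
rewrite -ge0_integralZl ?lee_fin //.
- by apply/measurable_EFinP/measurable_funTS; exact: measurable_nb_pmf.
- by move=> x _; rewrite lee_fin.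
Qed.

Let measurable_nb_sq_bound t (u a : R) :
  measurable_fun setT (fun x => ((u + a * lam t x) ^+ 2 + a ^+ 2 * nb_var r (lam t x))%:E).
Proof.
apply/measurable_EFinP; apply: measurable_funD.
  apply/measurable_funX; apply: measurable_funD; first exact: measurable_cst.
  by apply: measurable_funM => //; exact: measurable_cst.
apply: measurable_funM; first exact: measurable_cst.
apply: measurable_funD => //; apply: measurable_funM; last exact: measurable_cst.
exact: measurable_funX.
Qed.

Lemma integral_past_sq_affine_le t (A : set T) (u a : R) :
  past_sigma Y (t - 1) A -> 0 <= u -> 0 <= a ->
  (\int[P]_(x in A) ((u + a * (Y t x)%:R) ^+ 2)%:E <=
   \int[P]_(x in A) ((u + a * lam t x) ^+ 2 + a ^+ 2 * nb_var r (lam t x))%:E)%E.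
Proof.
move=> At u_ge0 a_ge0; have mA := past_measurable At.
rewrite (integral_past_Y (g := fun k => (u + a * k%:R) ^+ 2) At); last by move=> k; exact: sqr_ge0.
apply: ge0_le_integral => //.
- by move=> x _; apply: nneseries_ge0 => k _ _; rewrite lee_fin mulr_ge0 ?sqr_ge0.
- apply: ge0_emeasurable_sum => [k x _ _|k _]; first by rewrite lee_fin mulr_ge0 ?sqr_ge0.
  by apply: measurable_funTS; exact: measurable_nb_pmf_lam.
- exact/measurable_funTS/measurable_nb_sq_bound.
move=> x _; apply: lime_le.
  by apply: is_cvg_nneseries => k _ _; rewrite lee_fin mulr_ge0 ?sqr_ge0.
near=> N; rewrite sumEFin lee_fin big_mkord.
exact: nb_psum_sq_affine_le.
Unshelve. all: by end_near.
Qed.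

Lemma integral_Y_sq_le t :
  (\int[P]_x (((Y t x)%:R : R) ^+ 2)%:E <=
   1 + (2 + r%:R^-1)%:E * \int[P]_x (lam t x ^+ 2)%:E)%E.
Proof.
pose C : R := 2 + r%:R^-1; have C_ge0 : 0 <= C by rewrite addr_ge0 ?invr_ge0.
have := integral_past_sq_affine_le (past_sigmaT (Y := Y) (u := t - 1)) (lexx 0) ler01.
under eq_integral do rewrite add0r mul1r.
move=> /le_trans; apply.
apply: (@le_trans _ _ (\int[P]_x (1%:E + C%:E * (lam t x ^+ 2)%:E))%E).
  apply: ge0_le_integral => //.
  - by move=> x _; rewrite lee_fin addr_ge0 ?sqr_ge0 // mulr_ge0 ?sqr_ge0 ?nb_var_ge0.
  - by apply: emeasurable_funD => //; apply: emeasurable_funM => //; exact: measurable_cst.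
  move=> x _; rewrite -EFinM -EFinD lee_fin /C add0r mul1r expr1n mul1r /nb_var.
  have := lam_ge0 t x; set l := lam t x => l_ge0.
  have l_le : l <= 1 + l ^+ 2 by nra.
  have -> : 1 + (2 + r%:R^-1) * l ^+ 2 = (1 + l ^+ 2) + (l ^+ 2 + l ^+ 2 / r%:R) by ring.
  by rewrite addrCA lerD2r.
rewrite ge0_integralD //; last 2 first.
- by move=> x _; rewrite mule_ge0 // lee_fin sqr_ge0.
- by apply: emeasurable_funM => //; exact: measurable_cst.
rewrite ge0_integralZl //; last by move=> x _; rewrite lee_fin sqr_ge0.
rewrite integral_cst // mul1e.
by rewrite leeD2r //; exact: probability_le1.
Qed.

Variables a b c rho K : R.
Hypotheses (a_ge0 : 0 <= a) (b_ge0 : 0 <= b) (c_ge0 : 0 <= c).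
Hypotheses (rho_ge0 : 0 <= rho) (rho_lt1 : rho < 1) (K_ge0 : 0 <= K).
Hypothesis lam_le : forall t x, lam t x <= c + a * (Y (t - 1) x)%:R + b * lam (t - 1) x.
Hypothesis drift_le : forall x, 0 <= x ->
  (c + b + (a + b) * x) ^+ 2 + a ^+ 2 * nb_var r x <= rho * x ^+ 2 + K.

Let measurable_lam_itv t (i : interval R) : measurable (lam t @^-1` [set` i]).
Proof. exact: measurable_preimage_itv. Qed.

(* On the band [j <= lam_(t-1) < j + 1] the bound on [lam_t] becomes
   [c + b (j + 1) + a Y_(t-1)], an affine function of [Y_(t-1)] with constant
   coefficients, to which the conditional negative binomial moments apply. *)
Lemma integral_lam_sq_band_le t (A : set T) j :
  past_sigma Y (t - 1 - 1) A ->
  (\int[P]_(x in A `&` band (lam (t - 1)) j) (lam t x ^+ 2)%:E <=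
   \int[P]_(x in A `&` band (lam (t - 1)) j) (rho * lam (t - 1) x ^+ 2 + K)%:E)%E.
Proof.
set s := t - 1 => As; set B := A `&` _.
have B_past : past_sigma Y (s - 1) B by apply: past_sigmaI => //; exact: lam_past.
have mB := past_measurable B_past; set u := c + b * j.+1%:R.
have u_ge0 : 0 <= u by rewrite addr_ge0 ?mulr_ge0.
have mYs : measurable_fun setT (fun x => (Y s x)%:R : R).
  by apply: measurableT_comp (mY s) => // _ C _.
apply: (@le_trans _ _ (\int[P]_(x in B) ((u + a * (Y s x)%:R) ^+ 2)%:E)%E).
  apply: ge0_le_integral => //.
  - by move=> x _; rewrite lee_fin sqr_ge0.
  - exact: measurable_funTS.
  - apply/measurable_EFinP/measurable_funTS/measurable_funX.
    apply: measurable_funD; first exact: measurable_cst.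
    by apply: measurable_funM => //; exact: measurable_cst.
  move=> x [_]; rewrite /band /= in_itv /= => /andP[_ lam_lt]; rewrite lee_fin.
  rewrite ler_sqr ?nnegrE ?addr_ge0 ?mulr_ge0 //; apply: le_trans (lam_le t x) _.
  by rewrite -/s addrAC lerD2r lerD2l ler_wpM2l // ltW.
apply: le_trans (integral_past_sq_affine_le B_past u_ge0 a_ge0) _.
apply: ge0_le_integral => //.
- by move=> x _; rewrite lee_fin addr_ge0 ?sqr_ge0 // mulr_ge0 ?sqr_ge0 ?nb_var_ge0.
- exact/measurable_funTS/measurable_nb_sq_bound.
- apply/measurable_EFinP/measurable_funTS/measurable_funD; last exact: measurable_cst.
  by apply: measurable_funM; [exact: measurable_cst | exact: measurable_funX].
move=> x [_]; rewrite /band /= in_itv /= => /andP[j_le _]; rewrite lee_fin.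
apply: le_trans (drift_le (lam_ge0 s x)).
rewrite lerD2r ler_sqr ?nnegrE ?addr_ge0 ?mulr_ge0 ?addr_ge0 //.
by have := ler_wpM2l b_ge0 j_le; rewrite /u -natr1; lra.
Qed.

Lemma integral_lam_sq_step t (A : set T) : past_sigma Y (t - 1 - 1) A ->
  (\int[P]_(x in A) (lam t x ^+ 2)%:E <=
   rho%:E * \int[P]_(x in A) (lam (t - 1) x ^+ 2)%:E + K%:E * P A)%E.
Proof.
set s := t - 1 => As; have mA := past_measurable As.
have -> : (rho%:E * \int[P]_(x in A) (lam s x ^+ 2)%:E + K%:E * P A =
    \int[P]_(x in A) (rho * lam s x ^+ 2 + K)%:E)%E.
  under [in RHS]eq_integral do rewrite EFinD EFinM.
  rewrite ge0_integralD //; last 2 first.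
  - by move=> x _; rewrite mule_ge0 // lee_fin sqr_ge0.
  - by apply/measurable_funTS/emeasurable_funM => //; exact: measurable_cst.
  rewrite ge0_integralZl ?integral_cst //; first exact: measurable_funTS.
  by move=> x _; rewrite lee_fin sqr_ge0.
have mdrift : measurable_fun setT (fun x => (rho * lam s x ^+ 2 + K)%:E).
  apply/measurable_EFinP/measurable_funD; last exact: measurable_cst.
  by apply: measurable_funM; [exact: measurable_cst | exact: measurable_funX].
rewrite (ge0_integral_bands P (mlam s) (lam_ge0 s) (mlam_sq t)) //; last first.
  by move=> x; rewrite lee_fin sqr_ge0.
rewrite (ge0_integral_bands P (mlam s) (lam_ge0 s) mdrift) //; last first.
  by move=> x; rewrite lee_fin addr_ge0 ?mulr_ge0 ?sqr_ge0.
apply: lee_nneseries => [j _ _|j _]; last exact: integral_lam_sq_band_le.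
by apply: integral_ge0 => x _; rewrite lee_fin sqr_ge0.
Qed.

Lemma integral_lam_sq_iter n t (A : set T) : past_sigma Y (t - n%:Z - 1) A ->
  (\int[P]_(x in A) (lam t x ^+ 2)%:E <=
   (rho ^+ n)%:E * \int[P]_(x in A) (lam (t - n%:Z) x ^+ 2)%:E + (K / (1 - rho))%:E)%E.
Proof.
have K'_ge0 : 0 <= K / (1 - rho) by rewrite divr_ge0 // subr_ge0 ltW.
elim: n t => [|n IHn] t At.
  by rewrite subr0 expr0 mul1e leeDl // lee_fin.
have A_past1 : past_sigma Y (t - 1 - 1) A by apply: past_sigma_le At; lia.
have A_pastn : past_sigma Y (t - 1 - n%:Z - 1) A.
  by rewrite (_ : t - 1 - n%:Z = t - n.+1%:Z) //; lia.
have := IHn (t - 1) A_pastn; rewrite (_ : t - 1 - n%:Z = t - n.+1%:Z); last by lia.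
set I := (\int[P]_(x in A) (lam (t - n.+1%:Z) x ^+ 2)%:E)%E => IH_le.
have I_ge0 : (0 <= I)%E by apply: integral_ge0 => x _; rewrite lee_fin sqr_ge0.
apply: le_trans (integral_lam_sq_step A_past1) _.
apply: (@le_trans _ _ (rho%:E * ((rho ^+ n)%:E * I + (K / (1 - rho))%:E) + K%:E)%E).
  apply: leeD; first by apply: lee_wpmul2l; rewrite ?lee_fin.
  rewrite -[leRHS]mule1 lee_wpmul2l ?lee_fin //.
  exact/probability_le1/(past_measurable At).
rewrite ge0_muleDr ?mule_ge0 ?lee_fin ?exprn_ge0 // muleA -EFinM -exprS -addeA -EFinM -EFinD.
rewrite leeD // lee_fin (_ : rho * (K / (1 - rho)) + K = K / (1 - rho)) //.
by field; rewrite subr_eq0 gt_eqF.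
Qed.

Lemma integral_lam_sq_past_bounded n t (L : R) : 0 <= L ->
  (\int[P]_(x in lam (t - n%:Z) @^-1` `]-oo, L]) (lam t x ^+ 2)%:E <=
   (rho ^+ n * L ^+ 2 + K / (1 - rho))%:E)%E.
Proof.
move=> L_ge0; set A := _ @^-1` _.
have A_past : past_sigma Y (t - n%:Z - 1) A by exact: lam_past.
have mA := past_measurable A_past.
apply: le_trans (integral_lam_sq_iter A_past) _; rewrite EFinD EFinM leeD2r //.
rewrite EFinM lee_wpmul2l ?lee_fin ?exprn_ge0 //.
apply: (@le_trans _ _ (\int[P]_(x in A) (cst (L ^+ 2)%:E x))%E).
  apply: ge0_le_integral => //.
  - by move=> x _; rewrite lee_fin sqr_ge0.
  - exact/measurable_funTS/mlam_sq.
  - by move=> x; rewrite /A /= in_itv /= lee_fin ler_sqr ?nnegrE.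
rewrite integral_cst // -[leRHS]mule1 lee_wpmul2l ?lee_fin ?sqr_ge0 //.
exact: probability_le1.
Qed.

Hypothesis stationary : strictly_stationary P Y lam.

Lemma integral_lam_sq_truncated_le (M L n : nat) t :
  (\int[P]_(x in lam t @^-1` `]-oo, M%:R[) (lam t x ^+ 2)%:E <=
   (rho ^+ n * L%:R ^+ 2 + K / (1 - rho))%:E +
   (M%:R ^+ 2)%:E * P (lam t @^-1` `]L%:R, +oo[))%E.
Proof.
set D := lam t @^-1` _; set A := lam (t - n%:Z) @^-1` `]-oo, L%:R].
have mD : measurable D by exact: measurable_lam_itv.
have mA : measurable A by exact: measurable_lam_itv.
apply: (@le_trans _ _ (\int[P]_(x in A `|` (D `\` A)) (lam t x ^+ 2)%:E)%E).
  apply: ge0_subset_integral => //.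
  - by apply: measurableU => //; exact: measurableD.
  - exact: measurable_funTS.
  - by move=> x _; rewrite lee_fin sqr_ge0.
  - by move=> x Dx; have [Ax|nAx] := pselect (A x); [left | right].
rewrite ge0_integral_setU //; first last.
- by apply/disj_setPS => x [Ax [_ /(_ Ax)]].
- by move=> x _; rewrite lee_fin sqr_ge0.
- exact: measurable_funTS.
- exact: measurableD.
apply: leeD; first exact: integral_lam_sq_past_bounded.
apply: (@le_trans _ _ (\int[P]_(x in D `\` A) (cst (M%:R ^+ 2)%:E x))%E).
  apply: ge0_le_integral => //; first exact: measurableD.
  - by move=> x _; rewrite lee_fin sqr_ge0.
  - exact/measurable_funTS/mlam_sq.
  - by move=> x [+ _]; rewrite /D /= in_itv /= lee_fin => /ltW; rewrite ler_sqr ?nnegrE.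
rewrite integral_cst; last exact: measurableD.
rewrite lee_wpmul2l ?lee_fin ?sqr_ge0 //.
rewrite -[in leRHS](subrK n%:Z t) -(stationary_tail _ _ _ stationary).
apply: le_measure; rewrite ?inE //; first exact: measurableD.
by move=> x [_]; rewrite /A /= !in_itv /= andbT ltNge => /negP.
Qed.

Lemma integral_lam_sq_le t :
  (\int[P]_x (lam t x ^+ 2)%:E <= (K / (1 - rho) + 2)%:E)%E.
Proof.
apply: (ge0_integral_le_truncated (mlam t) (lam_ge0 t) (mlam_sq t)).
  by move=> x; rewrite lee_fin sqr_ge0.
move=> M; have M1_gt0 : 0 < M%:R ^+ 2 + 1 :> R by rewrite ltr_wpDl ?sqr_ge0.
have [L PL_le] : exists L : nat,
    (P (lam t @^-1` `]L%:R, +oo[) <= (M%:R ^+ 2 + 1)^-1%:E)%E.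
  by apply: exists_probability_gt_le (mlam t) _; rewrite invr_gt0.
have [n rhoL_le1] : exists n : nat, rho ^+ n * L%:R ^+ 2 <= 1.
  by apply: exists_expr_mul_le1; rewrite ?rho_ge0 ?sqr_ge0.
apply: le_trans (integral_lam_sq_truncated_le M L n t) _.
apply: le_trans (leeD2l _ (lee_wpmul2l _ PL_le)) _; first by rewrite lee_fin sqr_ge0.
rewrite -!EFinM -EFinD lee_fin.
have : M%:R ^+ 2 / (M%:R ^+ 2 + 1) <= 1 :> R by rewrite ler_pdivrMr // mul1r lerDl.
lra.
Qed.

Lemma integral_Y_sq_lt_pinfty t : (\int[P]_x (((Y t x)%:R : R) ^+ 2)%:E < +oo)%E.
Proof.
apply: le_lt_trans (integral_Y_sq_le t) _.
rewrite (le_lt_trans (leeD2l _ (lee_wpmul2l _ (integral_lam_sq_le t)))) ?lee_fin //.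
by rewrite -EFinM -EFinD ltry.
Qed.

End NegBinomialINGARCH.

Theorem proposition2
  (R : realType) (r : nat) (hr : (0 < r)%N)
  (X : topologicalType) (Theta : set X) (theta_star : X)
  (f : X -> nat -> R -> R) (a b : R)
  (d : measure_display) (T : measurableType d) (P : probability T R)
  (Y : int -> T -> nat) (lam : int -> T -> R) :
  compact Theta ->
  theta_star \in Theta ->
  (forall theta, theta \in Theta ->
     measurable_fun [set z : nat * R | 0 <= z.2] (fun z => f theta z.1 z.2)) ->
  (forall theta y l, theta \in Theta -> 0 <= l -> 0 <= f theta y l) ->
  0 <= a -> 0 <= b -> a + b < 1 ->
  (forall theta y y' l l', theta \in Theta -> 0 <= l -> 0 <= l' ->
     `|f theta y l - f theta y' l'| <= a * `|y%:R - y'%:R| + b * `|l - l'|) ->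
  (* (Y, lam) is a strictly stationary solution of the NB-INGARCH model *)
  (forall t, measurable_fun setT (Y t)) ->
  (forall t, measurable_fun setT (lam t)) ->
  (forall t x, 0 <= lam t x) ->
  (forall t x, lam t x = f theta_star (Y (t - 1) x) (lam (t - 1) x)) ->
  (forall t, (forall B, measurable B ->
     past_sigma Y (t - 1) (lam t @^-1` B))) ->
  (forall t (A : set T) (k : nat), past_sigma Y (t - 1) A ->
     P (A `&` Y t @^-1` [set k]) = (\int[P]_(x in A) (nb_pmf r (lam t x) k)%:E)%E) ->
  strictly_stationary P Y lam ->
  (a + b) ^+ 2 + a ^+ 2 / r%:R < 1 ->
  forall t, (\int[P]_x (((Y t x)%:R : R) ^+ 2)%:E < +oo)%E.
Proof.
move=> _ theta_in _ f_ge0 a_ge0 b_ge0 _ f_lip mY mlam lam_ge0 lam_rec lam_past Y_cond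
  stationary rate_lt1 t.
set c := f theta_star 0%N 0.
have c_ge0 : 0 <= c by exact: f_ge0.
have lam_le s x : lam s x <= c + a * (Y (s - 1) x)%:R + b * lam (s - 1) x.
  have := f_lip _ (Y (s - 1) x) 0%N (lam (s - 1) x) 0 theta_in (lam_ge0 _ _) (lexx 0).
  rewrite -lam_rec -/c !subr0 normr_nat [`|lam _ _|]ger0_norm //.
  by have := ler_norm (lam s x - c); lra.
have rate_itv : 0 <= (a + b) ^+ 2 + a ^+ 2 / r%:R < 1.
  by rewrite rate_lt1 addr_ge0 ?sqr_ge0 ?divr_ge0 ?sqr_ge0.
have [rho [K [rho_ge0 rho_lt1 K_ge0 quad_le]]] :=
  @quadratic_dominated _ _ (2 * (c + b) * (a + b) + a ^+ 2) ((c + b) ^+ 2) rate_itv.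
apply: (integral_Y_sq_lt_pinfty hr mY mlam lam_ge0 lam_past Y_cond a_ge0 b_ge0 c_ge0
  rho_ge0 rho_lt1 K_ge0 lam_le _ stationary) => x _.
by apply: le_trans (quad_le x); rewrite /nb_var; lra.
Qed.
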